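(* Let $q$ be a power of an odd prime with $q\equiv1\pmod 4$, $t=\frac{q-1}{4}$, $T$ a generator of $\widehat{\mathbb F_q^{\times}}$, and $\lambda\in\mathbb F_q$ with $\lambda^4=1$. Then $$\frac{3}{q-1}\sum_{j=0}^{q-2}\frac{g(T^{j})^2\,g(T^{2t+j})^2}{g(T^{4j})}\,T^{4j}(4\lambda)=-6q+3q\,T^t(-1).$$
   Context: Characters are extended by $\chi(0)=0$. With $\mathrm{tr}:\mathbb F_q\to\mathbb F_p$ the trace, $\zeta$ a fixed primitive $p$-th root of unity and $\theta(x)=\zeta^{\mathrm{tr}(x)}$, the Gauss sum is $g(\chi)=\sum_{x\in\mathbb F_q}\chi(x)\theta(x)$ (so $g$ of the trivial character is $-1$). *)

From HB Require Import structures.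
From mathcomp Require Import all_boot all_order all_algebra all_field.
Set Implicit Arguments. Unset Strict Implicit. Unset Printing Implicit Defensive.
Import Order.TTheory GRing.Theory Num.Theory.
Local Open Scope ring_scope.

Definition is_mchar (F : finFieldType) (chi : F -> algC) : Prop :=
  [/\ chi 0 = 0,
      (forall x y : F, chi (x * y) = chi x * chi y) &
      (forall x : F, x != 0 -> chi x != 0)].

(* j-th power of a character in the character group (still extended by 0 at 0;
   so the 0-th power is the trivial character with value 0 at 0). *)
Definition mchar_pow (F : finFieldType) (chi : F -> algC) (j : nat) (x : F) : algC :=
  if x == 0 then 0 else chi x ^+ j.

Definition mchar_generator (F : finFieldType) (T : F -> algC) : Prop :=
  is_mchar T /\
  forall chi : F -> algC, is_mchar chi ->
    exists j : nat, forall x : F, chi x = mchar_pow T j x.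

(* Absolute trace F_q -> F_p, q = p^n, as an element of F (lies in the prime field). *)
Definition abs_trace (F : finFieldType) (p : nat) (x : F) : F :=
  \sum_(i < logn p #|F|) x ^+ (p ^ i).

Definition trace_nat (F : finFieldType) (p : nat) (x : F) : nat :=
  if [pick k : 'I_p | abs_trace p x == (k : nat)%:R] is Some k then (k : nat) else 0%N.

Definition theta (F : finFieldType) (p : nat) (zeta : algC) (x : F) : algC :=
  zeta ^+ trace_nat p x.

Definition gauss (F : finFieldType) (p : nat) (zeta : algC) (chi : F -> algC) : algC :=
  \sum_(x : F) chi x * theta p zeta x.

From HB Require Import structures.
From mathcomp Require Import all_boot all_order all_algebra all_field.
From mathcomp Require Import cyclic ring zify.
Set Implicit Arguments. Unset Strict Implicit. Unset Printing Implicit Defensive.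
Import Order.TTheory GRing.Theory Num.Theory.
Local Open Scope ring_scope.

(* Write G j for the Gauss sum of T ^ j, n = q - 1 = 4 t and phi = T ^ (2 t) for
   the quadratic character.  When 4 j is not divisible by n, the relations
   G a * G b = J(a, b) * G (a + b) together with the duplication formula
   T ^ a (4) * J(a, a) = J(phi, T ^ a) turn the j-th summand into
   q * J(phi, T ^ (2 j)); the four remaining summands j = 0, t, 2 t, 3 t are
   computed from G a * G (-a) = T ^ a (-1) * q.  Orthogonality gives
   sum_j J(phi, T ^ (2 j)) = n * phi(2), and phi(2) = T ^ t (-1) because
   2 = (1 + i) ^ 2 / i with i ^ 2 = -1. *)

Lemma mulr_fixed_eq0 (R : idomainType) (c s : R) : c != 1 -> c * s = s -> s = 0.
Proof.
move=> c_neq1 /eqP; rewrite -subr_eq0 -{2}(mul1r s) -mulrBl mulf_eq0 subr_eq0.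
by rewrite (negbTE c_neq1) => /eqP.
Qed.

Lemma natr_eq_pchar (R : nzRingType) (p a b : nat) : p \in [pchar R] ->
  (a%:R == b%:R :> R) = (a == b %[mod p]).
Proof.
move=> pcharRp; wlog leba : a b / (b <= a)%N.
  move=> IH; case: (leqP b a) => [/IH //|/ltnW/IH].
  by rewrite eq_sym => ->; rewrite eq_sym.
by rewrite eqn_mod_dvd // (dvdn_pcharf pcharRp) natrB // subr_eq0.
Qed.

Section AbsTrace.
Variables (F : finFieldType) (p : nat).
Hypothesis pcharFp : p \in [pchar F].

Local Notation m := (logn p #|F|).
Local Notation tr := (@abs_trace F p).

Let p_pr : prime p := pcharf_prime pcharFp.

Lemma logn_card_gt0 : (0 < m)%N.
Proof.
rewrite lt0n; apply: contraTneq (finNzRing_gt1 F) => m0.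
by rewrite (card_pprimeChar pcharFp) m0.
Qed.

Lemma exprD_pchar_pow (x y : F) i : (x + y) ^+ (p ^ i) = x ^+ (p ^ i) + y ^+ (p ^ i).
Proof. by rewrite exprDn_pchar // (eq_pnat _ (pcharf_eq pcharFp)) pnatX pnat_id. Qed.

Lemma abs_traceD (x y : F) : tr (x + y) = tr x + tr y.
Proof. by rewrite /abs_trace -big_split; apply: eq_bigr => i _; rewrite exprD_pchar_pow. Qed.

Lemma abs_trace0 : tr 0 = 0.
Proof.
by rewrite /abs_trace big1 // => i _; rewrite expr0n expn_eq0 (gtn_eqF (prime_gt0 p_pr)).
Qed.

(* The Frobenius map permutes the summands of the trace cyclically, as x ^+ q = x. *)
Lemma abs_trace_fixed (x : F) : tr x ^+ p = tr x.
Proof.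
have cardF : #|F| = (p ^ m)%N := card_pprimeChar pcharFp.
rewrite -[_ ^+ p]/(pFrobenius_aut pcharFp (tr x)) /abs_trace rmorph_sum /=.
have := logn_card_gt0; case: m cardF => // k cardF _.
rewrite big_ord_recr big_ord_recl /= pFrobenius_autE -exprM -expnSr -cardF expf_card.
rewrite expn0 expr1 addrC; congr (_ + _); apply: eq_bigr => i _.
by rewrite pFrobenius_autE -exprM -expnSr.
Qed.

Lemma abs_trace_nat (x : F) : exists2 k, (k < p)%N & tr x = k%:R.
Proof.
suff /existsP[k /eqP trx] : [exists k : 'I_p, tr x == k%:R] by exists k.
apply: contraT => /existsPn no_k.
pose P : {poly F} := 'X^p - 'X.
have p_gt1 := prime_gt1 p_pr.
have sizeP : size P = p.+1 by rewrite size_polyDl size_polyXn // size_opp size_polyX.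
have rootP y : y ^+ p = y -> root P y by move=> yp; rewrite rootE !hornerE yp subrr.
have := @max_poly_roots _ P (tr x :: [seq (k%:R : F) | k <- iota 0 p]).
rewrite -size_poly_eq0 sizeP /= size_map size_iota ltnn rootP ?abs_trace_fixed //=.
apply=> //.
  apply/allP => _ /mapP[k _ ->]; apply: rootP.
  by have := pFrobenius_aut_nat pcharFp k; rewrite pFrobenius_autE.
rewrite map_inj_in_uniq ?iota_uniq ?andbT.
  apply/mapP => -[k]; rewrite mem_iota add0n => /andP[_ ltkp] trx.
  by have := no_k (Ordinal ltkp); rewrite trx eqxx.
move=> a b; rewrite !mem_iota !add0n => /andP[_ ltap] /andP[_ ltbp] /eqP.
by rewrite (natr_eq_pchar _ _ pcharFp) !modn_small // => /eqP.
Qed.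

Lemma trace_natE (x : F) : (trace_nat p x)%:R = tr x.
Proof.
rewrite /trace_nat; case: pickP => [k /eqP -> //|no_k].
have [k ltkp trx] := abs_trace_nat x.
by have := no_k (Ordinal ltkp); rewrite /= trx eqxx.
Qed.

Lemma abs_trace_neq0 : exists a : F, tr a != 0.
Proof.
apply/existsP; apply: contraT => /existsPn tr_eq0.
pose P : {poly F} := \sum_(i < m) 'X^(p ^ i).
have p_gt1 := prime_gt1 p_pr; have m_gt0 := logn_card_gt0.
have top_lt : (m.-1 < m)%N by rewrite prednK.
have coefP : P`_(p ^ m.-1) = 1.
  rewrite /P coef_sum (bigD1 (Ordinal top_lt)) //= coefXn eqxx big1 ?addr0 //.
  move=> i i_neq; rewrite coefXn eqn_exp2l //.
  have /negbTE-> // : m.-1 != i by apply: contra i_neq => /eqP eq_i; apply/eqP/val_inj.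
have P_neq0 : P != 0 by apply: contra_eq_neq coefP => ->; rewrite coef0 eq_sym oner_neq0.
have sizeP : (size P <= (p ^ m.-1).+1)%N.
  apply: leq_trans (size_sum _ _ _) _; apply/bigmax_leqP => i _.
  by rewrite size_polyXn ltnS leq_exp2l // -ltnS prednK.
have all_roots : all (root P) (enum F).
  apply/allP => y _; rewrite rootE horner_sum.
  under eq_bigr do rewrite hornerXn.
  exact: negbNE (tr_eq0 y).
have := max_poly_roots P_neq0 all_roots (enum_uniq F).
rewrite -cardE (card_pprimeChar pcharFp) => /leq_trans/(_ sizeP).
by rewrite ltnS leq_exp2l // leqNgt ltn_predL m_gt0.
Qed.

End AbsTrace.

Section AdditiveCharacter.
Variables (F : finFieldType) (p : nat) (zeta : algC).
Hypotheses (pcharFp : p \in [pchar F]) (zeta_prim : p.-primitive_root zeta).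

Local Notation theta := (@theta F p zeta).

Lemma theta_eq1 (x : F) : (theta x == 1) = (abs_trace p x == 0).
Proof.
by rewrite /theta -(prim_order_dvd zeta_prim) (dvdn_pcharf pcharFp) (trace_natE pcharFp).
Qed.

Lemma thetaD (x y : F) : theta (x + y) = theta x * theta y.
Proof.
rewrite /theta -exprD; apply/eqP; rewrite (eq_prim_root_expr zeta_prim).
by rewrite -(natr_eq_pchar _ _ pcharFp) natrD !(trace_natE pcharFp) (abs_traceD pcharFp).
Qed.

Lemma theta0 : theta 0 = 1.
Proof. by apply/eqP; rewrite theta_eq1 (abs_trace0 pcharFp). Qed.

Lemma sum_theta : \sum_(x : F) theta x = 0.
Proof.
have [a tra_neq0] := abs_trace_neq0 pcharFp.
apply: (@mulr_fixed_eq0 _ (theta a)); first by rewrite theta_eq1.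
rewrite mulr_sumr [RHS](reindex_inj (addrI a)) /=.
by apply: eq_bigr => x _; rewrite thetaD.
Qed.

Lemma sum_theta_mul (a : F) : \sum_(y : F) theta (a * y) = if a == 0 then #|F|%:R else 0.
Proof.
have [->|a_neq0] := eqVneq a 0.
  by under eq_bigr do rewrite mul0r theta0; rewrite sumr_const.
by rewrite -[RHS]sum_theta [RHS](reindex_inj (mulfI a_neq0)).
Qed.

End AdditiveCharacter.

Lemma sqr_one_sub_eq1 (R : idomainType) (x : R) :
  ((1 - x) ^+ 2 == 1) = (x == 0) || (x == 2%:R).
Proof.
rewrite sqrf_eq1; congr (_ || _); apply/eqP/eqP => [e|->].
- by rewrite -(subKr 1 x) e subrr.
- by rewrite subr0.
- by rewrite -(subKr 1 x) e opprK -mulr2n.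
- by ring.
Qed.

Section FinFieldUnits.
Variable F : finFieldType.
Local Notation n := #|F|.-1.

Lemma card_finField_pred_gt0 : (0 < n)%N.
Proof. by rewrite -ltnS prednK ?finNzRing_gt1 // ltnW // finNzRing_gt1. Qed.

Lemma natr_card_pred (R : pzRingType) : n%:R = #|F|%:R - 1 :> R.
Proof. by rewrite -subn1 natrB // ltnW // finNzRing_gt1. Qed.

Lemma expf_card_pred (x : F) : x != 0 -> x ^+ n = 1.
Proof.
move=> x_neq0; apply: (mulfI x_neq0).
by rewrite mulr1 -exprS prednK ?expf_card // ltnW // finNzRing_gt1.
Qed.

Lemma finField_prim_root : exists w : F, n.-primitive_root w.
Proof.
have units_unity : all n.-unity_root (enum (predC1 (0 : F))).
  by apply/allP => x; rewrite mem_enum => x_neq0; apply/unity_rootP/expf_card_pred.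
have card_units : (n <= size (enum (predC1 (0 : F)%R)))%N by rewrite -cardE cardC1.
have [w _ w_prim] := hasP (has_prim_root card_finField_pred_gt0 units_unity (enum_uniq _) card_units).
by exists w.
Qed.

Lemma finField_two_neq0 : ~~ odd n -> 2%:R != 0 :> F.
Proof.
apply: contraNneq => two_eq0.
have pchar2 : 2 \in [pchar F] by rewrite inE two_eq0 eqxx.
rewrite (card_pprimeChar pchar2) -(prednK (logn_card_gt0 pchar2)) expnS mul2n.
by rewrite -(prednK (expn_gt0 2 _)) doubleS /= odd_double.
Qed.

End FinFieldUnits.

Section MultiplicativeCharacter.
Variables (F : finFieldType) (T : F -> algC).
Hypothesis T_mchar : is_mchar T.
Local Notation n := #|F|.-1.
Local Notation c j := (mchar_pow T j%N).

Lemma mcharM x y : T (x * y) = T x * T y. Proof. by case: T_mchar. Qed.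
Lemma mchar_neq0 x : x != 0 -> T x != 0. Proof. by case: T_mchar => _ _; apply. Qed.

Lemma mchar1 : T 1 = 1.
Proof.
apply: (mulfI (mchar_neq0 (oner_neq0 F))).
by rewrite -mcharM !mulr1.
Qed.

Lemma mcharX x k : T (x ^+ k) = T x ^+ k.
Proof. by elim: k => [|k IHk]; rewrite ?mchar1 // !exprS mcharM IHk. Qed.

Lemma mchar_unity x : x != 0 -> T x ^+ n = 1.
Proof. by move=> x_neq0; rewrite -mcharX expf_card_pred // mchar1. Qed.

Lemma mchar_powM j x y : c j (x * y) = c j x * c j y.
Proof.
rewrite /mchar_pow mulf_eq0.
have [_|x_neq0] := eqVneq x 0; first by rewrite mul0r.
by have [_|y_neq0] := eqVneq y 0; rewrite ?mulr0 // mcharM exprMn.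
Qed.

Lemma mchar_powD i j x : c (i + j) x = c i x * c j x.
Proof. by rewrite /mchar_pow; case: (x == 0); rewrite ?mul0r // exprD. Qed.

Lemma mchar_pow_mod j x : c (j %% n) x = c j x.
Proof.
by rewrite /mchar_pow; have [//|x_neq0] := eqVneq x 0; rewrite expr_mod // mchar_unity.
Qed.

Lemma mchar_pow0 j : c j 0 = 0.
Proof. by rewrite /mchar_pow eqxx. Qed.

Lemma mchar_pow1 j : c j 1 = 1.
Proof. by rewrite /mchar_pow oner_eq0 mchar1 expr1n. Qed.

Lemma mchar_pow_neq0 j x : x != 0 -> c j x != 0.
Proof. by move=> x_neq0; rewrite /mchar_pow (negbTE x_neq0) expf_neq0 // mchar_neq0. Qed.

Lemma mchar_pow_dvd j x : (n %| j)%N -> x != 0 -> c j x = 1.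
Proof.
move=> /dvdnP[k ->] x_neq0; rewrite /mchar_pow (negbTE x_neq0).
by rewrite mulnC exprM mchar_unity // expr1n.
Qed.

Lemma mchar_powX j x k : c j (x ^+ k) = c j x ^+ k.
Proof. by elim: k => [|k IHk]; rewrite ?mchar_pow1 // !exprS mchar_powM IHk. Qed.

Lemma mchar_pow_mull k j x : (0 < k)%N -> c (k * j) x = c j (x ^+ k).
Proof.
move=> k_gt0; rewrite mchar_powX /mchar_pow mulnC exprM.
by have [_|//] := eqVneq x 0; rewrite expr0n gtn_eqF.
Qed.

Lemma mchar_pow_sqrN1 j : c j (-1) ^+ 2 = 1.
Proof. by rewrite -mchar_powX sqrrN expr1n mchar_pow1. Qed.

Definition jacobi (a b : nat) : algC := \sum_(x : F) c a x * c b (1 - x).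

Lemma jacobi_addn a b : jacobi a (b + n)%N = jacobi a b.
Proof. by apply: eq_bigr => x _; rewrite -(mchar_pow_mod (b + n)%N) modnDr mchar_pow_mod. Qed.

End MultiplicativeCharacter.

Section CharacterGenerator.
Variables (F : finFieldType) (T : F -> algC).
Hypothesis T_gen : mchar_generator T.
Local Notation n := #|F|.-1.
Local Notation c j := (mchar_pow T j%N).

Let T_mchar : is_mchar T := T_gen.1.

(* Since every character is a power of T, T must be faithful on a generator
   of F^x: compare T with a character sending that generator to a primitive
   root of unity. *)
Lemma mchar_generator_prim_root :
  exists w : F, n.-primitive_root w /\ n.-primitive_root (T w).
Proof.
have n_gt0 := card_finField_pred_gt0 F.
have [w w_prim] := finField_prim_root F.
have [rho rho_prim] := C_prim_root_exists n_gt0.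
have w_neq0 : w != 0 by rewrite (prim_root_eq0 w_prim) -lt0n.
pose dlog (x : F) : nat := if [pick i : 'I_n | w ^+ i == x] is Some i then val i else 0%N.
have dlogK x : x != 0 -> w ^+ dlog x = x.
  move=> x_neq0; rewrite /dlog; case: pickP => [i /eqP //|no_i].
  have [i x_def] := prim_rootP w_prim (expf_card_pred x_neq0).
  by have := no_i i; rewrite -x_def eqxx.
pose chi (x : F) := if x == 0 then 0 else rho ^+ dlog x.
have chiX k : chi (w ^+ k) = rho ^+ k.
  rewrite /chi (negbTE (expf_neq0 k w_neq0)); apply/eqP.
  by rewrite (eq_prim_root_expr rho_prim) -(eq_prim_root_expr w_prim) dlogK // expf_neq0.
have chi_mchar : is_mchar chi.
  split; first by rewrite /chi eqxx.
    move=> x y; have [->|x_neq0] := eqVneq x 0; first by rewrite mul0r /chi eqxx mul0r.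
    have [->|y_neq0] := eqVneq y 0; first by rewrite mulr0 /chi eqxx mulr0.
    by rewrite -(dlogK x x_neq0) -(dlogK y y_neq0) -exprD !chiX exprD.
  by move=> x x_neq0; rewrite /chi (negbTE x_neq0) expf_neq0 // (prim_root_eq0 rho_prim) -lt0n.
have [j chi_def] := T_gen.2 chi chi_mchar.
exists w; split => //.
have [k k_prim k_dvd] := prim_order_exists n_gt0 (mchar_unity T_mchar w_neq0).
suff n_dvd_k : (n %| k)%N by rewrite -(eqP (_ : k == n)) // eqn_dvd k_dvd n_dvd_k.
rewrite (prim_order_dvd rho_prim) -chiX chi_def /mchar_pow (negbTE (expf_neq0 k w_neq0)).
by rewrite mcharX // (prim_expr_order k_prim) expr1n.
Qed.

Lemma sum_mchar_pow_ord x : x != 0 -> \sum_(j < n) c j x = if x == 1 then n%:R else 0.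
Proof.
move=> x_neq0; have [w [w_prim Tw_prim]] := mchar_generator_prim_root.
have [->|x_neq1] := eqVneq x 1.
  by rewrite (eq_bigr (fun _ => 1)) => [|j _]; rewrite ?mchar_pow1 // sumr_const card_ord.
have Tx_neq1 : T x != 1.
  have [k x_def] := prim_rootP w_prim (expf_card_pred x_neq0).
  by rewrite x_def mcharX // -(prim_order_dvd Tw_prim) (prim_order_dvd w_prim) -x_def.
rewrite (eq_bigr (fun j : 'I_n => T x ^+ j)) => [|j _]; last by rewrite /mchar_pow (negbTE x_neq0).
apply/eqP; have /esym/eqP := subrX1 (T x) n.
by rewrite mchar_unity // subrr mulf_eq0 subr_eq0 (negbTE Tx_neq1).
Qed.

Lemma sum_mchar_pow j : ~~ (n %| j)%N -> \sum_x c j x = 0.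
Proof.
move=> n_ndvd_j; have [w [w_prim Tw_prim]] := mchar_generator_prim_root.
have w_neq0 : w != 0 by rewrite (prim_root_eq0 w_prim) -lt0n card_finField_pred_gt0.
apply: (@mulr_fixed_eq0 _ (c j w)).
  by rewrite /mchar_pow (negbTE w_neq0) -(prim_order_dvd Tw_prim).
rewrite mulr_sumr [RHS](reindex_inj (mulfI w_neq0)) /=.
by apply: eq_bigr => x _; rewrite mchar_powM.
Qed.

Lemma sum_mchar_pow_dvd j : (n %| j)%N -> \sum_x c j x = n%:R.
Proof.
move=> n_dvd_j; rewrite (bigD1 0) //= mchar_pow0 add0r.
rewrite (eq_bigr (fun _ => 1)) => [|x x_neq0]; last exact: mchar_pow_dvd.
by rewrite sumr_const -(cardC1 0).
Qed.

Lemma sum_mchar_pow_double y : \sum_(j < n) c (2 * j) y = (y ^+ 2 == 1)%:R * n%:R.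
Proof.
have [->|y_neq0] := eqVneq y 0.
  by rewrite big1 => [|j _]; rewrite ?mchar_pow0 // expr0n eq_sym oner_eq0 mul0r.
have y2_neq0 : y ^+ 2 != 0 by rewrite expf_neq0.
rewrite (eq_bigr (fun j : 'I_n => c j (y ^+ 2))) => [|j _]; last first.
  by rewrite (mchar_powX T_mchar) /mchar_pow (negbTE y_neq0) -exprM mulnC.
by rewrite sum_mchar_pow_ord //; case: (_ == 1); rewrite ?mul1r ?mul0r.
Qed.

Variable s : nat.
Hypothesis n_eq : n = (s * 2)%N.

Let two_neq0 : 2%:R != 0 :> F.
Proof. by apply: finField_two_neq0; rewrite n_eq oddM andbF. Qed.

Lemma quad_sqr (x : F) : x != 0 -> c s (x ^+ 2) = 1.
Proof.
by move=> x_neq0; rewrite mchar_powX // /mchar_pow (negbTE x_neq0) -exprM -n_eq mchar_unity.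
Qed.

Lemma quad_nonsq (z : F) : z != 0 -> (forall y, y ^+ 2 != z) -> c s z = -1.
Proof.
move=> z_neq0 z_nonsq; have [w [w_prim Tw_prim]] := mchar_generator_prim_root.
have s_gt0 : (0 < s)%N by have := card_finField_pred_gt0 F; rewrite n_eq muln_gt0 => /andP[].
have : c s z ^+ 2 == 1.
  by rewrite /mchar_pow (negbTE z_neq0) -exprM -n_eq mchar_unity.
rewrite sqrf_eq1 => /orP[|/eqP //]; have [[k _] /= z_def] := prim_rootP w_prim (expf_card_pred z_neq0).
rewrite /mchar_pow (negbTE z_neq0) z_def mcharX // -exprM -(prim_order_dvd Tw_prim).
rewrite n_eq (mulnC k) dvdn_pmul2l // => /dvdnP[h k_def].
by have := z_nonsq (w ^+ h); rewrite -exprM -k_def -z_def eqxx.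
Qed.

Lemma card_sqrt (z : F) : \sum_y ((y ^+ 2 == z)%:R : algC) = 1 + c s z.
Proof.
have [->|z_neq0] := eqVneq z 0.
  rewrite mchar_pow0 addr0 (bigD1 0) //= expr0n eqxx big1 ?addr0 // => y y_neq0.
  by rewrite expf_eq0 /= (negbTE y_neq0).
have [/existsP[y0 /eqP z_def]|/existsPn z_nonsq] := boolP [exists y, y ^+ 2 == z].
  have y0_neq0 : y0 != 0 by apply: contra_neq z_neq0 => y0_eq0; rewrite -z_def y0_eq0 expr0n.
  have y0_neqN : - y0 != y0.
    by rewrite -subr_eq0 -opprD oppr_eq0 -mulr2n -mulr_natr mulf_neq0.
  rewrite -z_def quad_sqr // (bigD1 y0) //= (bigD1 (- y0)) //= sqrrN eqxx.
  rewrite big1 ?addr0 // => y /andP[y_neqN y_neq].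
  by rewrite eqf_sqr (negbTE y_neq) (negbTE y_neqN).
by rewrite quad_nonsq // subrr big1 // => y _; rewrite (negbTE (z_nonsq y)).
Qed.

Lemma sum_sqr (f : F -> algC) : \sum_y f (y ^+ 2) = \sum_z (1 + c s z) * f z.
Proof.
under [RHS]eq_bigr do rewrite -card_sqrt mulr_suml.
rewrite exchange_big /=; apply: eq_bigr => y _.
rewrite (bigD1 (y ^+ 2)) //= eqxx mul1r big1 ?addr0 // => z /negbTE z_neq.
by rewrite eq_sym z_neq mul0r.
Qed.

(* The substitution x = (1 + y) / 2 turns x (1 - x) into (1 - y ^+ 2) / 4. *)
Lemma jacobi_duplication a : ~~ (n %| a)%N -> c a 4%:R * jacobi T a a = jacobi T s a.
Proof.
move=> n_ndvd_a; pose h := (2%:R : F)^-1.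
have h_neq0 : h != 0 by rewrite invr_eq0.
have h_inj : injective (fun y : F => h * (1 + y)) by move=> y1 y2 /(mulfI h_neq0)/addrI.
rewrite /jacobi [in LHS](reindex_inj h_inj) /=.
rewrite (eq_bigr (fun y => c a (h ^+ 2) * c a (1 - y ^+ 2))) => [|y _]; last first.
  by rewrite -!(mchar_powM T_mchar); congr (c a _); rewrite /h; field.
rewrite -mulr_sumr mulrA -(mchar_powM T_mchar) (_ : 4%:R * h ^+ 2 = 1); last by rewrite /h; field.
rewrite (mchar_pow1 T_mchar) mul1r (sum_sqr (fun z => c a (1 - z))).
rewrite (eq_bigr (fun z => c a (1 - z) + c s z * c a (1 - z))) => [|z _]; last by rewrite mulrDl mul1r.
rewrite big_split /= (reindex_inj (can_inj (subKr 1))) /=.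
under eq_bigr do rewrite subKr.
by rewrite sum_mchar_pow // add0r.
Qed.

End CharacterGenerator.

Section GaussSums.
Variables (F : finFieldType) (p : nat) (zeta : algC) (T : F -> algC).
Hypotheses (pcharFp : p \in [pchar F]) (zeta_prim : p.-primitive_root zeta).
Hypothesis T_gen : mchar_generator T.
Local Notation n := #|F|.-1.
Local Notation c j := (mchar_pow T j%N).
Local Notation G j := (gauss p zeta (mchar_pow T j%N)).
Local Notation theta := (@theta F p zeta).

Let T_mchar : is_mchar T := T_gen.1.

Lemma gauss_mod j : G (j %% n) = G j.
Proof. by apply: eq_bigr => x _; rewrite mchar_pow_mod. Qed.

Lemma gauss_addn j : G (j + n) = G j.
Proof. by rewrite -gauss_mod modnDr gauss_mod. Qed.

Lemma gauss_pow0 : G 0 = -1.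
Proof.
have /eqP := sum_theta pcharFp zeta_prim; rewrite (bigD1 0) //= theta0 //.
rewrite addrC addr_eq0 => /eqP <-; rewrite /gauss (bigD1 0) //= mchar_pow0 mul0r add0r.
by apply: eq_bigr => x x_neq0; rewrite mchar_pow_dvd ?dvdn0 // mul1r.
Qed.

Lemma gauss_dvd j : (n %| j)%N -> G j = -1.
Proof. by move=> /eqP n_dvd_j; rewrite -gauss_mod n_dvd_j gauss_pow0. Qed.

Lemma sum_mchar_pow_convolution a b u : \sum_x c a x * c b (u - x)
  = c (a + b) u * jacobi T a b + (u == 0)%:R * c b (-1) * \sum_x c (a + b) x.
Proof.
have [->|u_neq0] := eqVneq u 0.
  rewrite mchar_pow0 mul0r add0r mul1r mulr_sumr; apply: eq_bigr => x _.
  by rewrite sub0r -[- x]mulN1r !(mchar_powM T_mchar) mchar_powD mulrCA.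
rewrite mulr0n !mul0r addr0 /jacobi mulr_sumr [LHS](reindex_inj (mulfI u_neq0)) /=.
apply: eq_bigr => x _; have -> : u - u * x = u * (1 - x) by rewrite mulrBr mulr1.
rewrite !(mchar_powM T_mchar) mchar_powD.
ring.
Qed.

Lemma gaussM a b :
  G a * G b = jacobi T a b * G (a + b) + c b (-1) * \sum_x c (a + b) x.
Proof.
rewrite /gauss mulr_suml.
transitivity (\sum_x \sum_u theta u * (c a x * c b (u - x))).
  apply: eq_bigr => x _; rewrite mulr_sumr [LHS](reindex_inj (addIr (- x))) /=.
  apply: eq_bigr => u _.
  have -> : theta u = theta x * theta (u - x) by rewrite -thetaD // addrC subrK.
  ring.
rewrite exchange_big /=; under eq_bigr do rewrite -mulr_sumr sum_mchar_pow_convolution mulrDr.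
rewrite big_split /= mulr_sumr; congr (_ + _).
  by apply: eq_bigr => u _; ring.
rewrite (bigD1 0) //= eqxx theta0 // !mul1r [X in _ + X]big1 ?addr0 // => u /negbTE u_neq0.
by rewrite u_neq0 !mul0r mulr0.
Qed.

Lemma gaussM_jacobi a b : ~~ (n %| a + b)%N -> G a * G b = jacobi T a b * G (a + b).
Proof. by move=> n_ndvd; rewrite gaussM sum_mchar_pow // mulr0 addr0. Qed.

Lemma gauss_sqr j : ~~ (n %| 2 * j)%N -> G j ^+ 2 = jacobi T j j * G (2 * j).
Proof. by move=> n_ndvd; rewrite expr2 gaussM_jacobi addnn -?mul2n. Qed.

(* Substituting x = u y, the double sum collapses onto u = -1 by orthogonality of theta. *)
Lemma gaussM_conj a b : (n %| a + b)%N -> ~~ (n %| a)%N ->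
  G a * G b = c a (-1) * #|F|%:R.
Proof.
move=> n_dvd_ab n_ndvd_a.
have inner u : \sum_y (y != 0)%:R * theta ((u + 1) * y) = (if u == -1 then #|F|%:R else 0) - 1.
  have := sum_theta_mul pcharFp zeta_prim (u + 1).
  rewrite addr_eq0 (bigD1 0) //= mulr0 theta0 // addrC => /(canRL (addrK 1)) <-.
  rewrite (bigD1 0) //= eqxx mul0r add0r; apply: eq_bigr => y ->; exact: mul1r.
rewrite /gauss mulr_suml; under eq_bigr do rewrite mulr_sumr.
rewrite exchange_big /=.
transitivity (\sum_y \sum_u c a u * ((y != 0)%:R * theta ((u + 1) * y))).
  apply: eq_bigr => y _; have [->|y_neq0] := eqVneq y 0.
    by rewrite !big1 // => u _; rewrite /= ?mchar_pow0 ?mulr0n !mul0r ?mulr0.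
  rewrite [LHS](reindex_inj (mulIf y_neq0)) /=; apply: eq_bigr => u _.
  have cy : c a y * c b y = 1 by rewrite -mchar_powD mchar_pow_dvd.
  rewrite /= mulr1n mul1r mulrDl mul1r thetaD // (mchar_powM T_mchar) -[RHS]mulr1 -cy; ring.
rewrite exchange_big /=; under eq_bigr do rewrite -mulr_sumr inner mulrBr mulr1.
rewrite sumrB sum_mchar_pow // subr0 (bigD1 (-1)) //= eqxx big1 ?addr0 //.
by move=> u /negbTE->; rewrite mulr0.
Qed.

Lemma gauss_neq0 j : G j != 0.
Proof.
have [n_dvd_j|n_ndvd_j] := boolP (n %| j)%N.
  by rewrite gauss_dvd // oppr_eq0 oner_eq0.
have n_dvd : (n %| j + n.-1 * j)%N by rewrite -mulSn prednK ?card_finField_pred_gt0 ?dvdn_mulr.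
have conj_neq0 : c j (-1) * #|F|%:R != 0.
  by rewrite mulf_neq0 ?mchar_pow_neq0 ?oppr_eq0 ?oner_eq0 // pnatr_eq0 -lt0n ltnW ?finNzRing_gt1.
by apply: contraNneq conj_neq0 => Gj_eq0; rewrite -(gaussM_conj n_dvd n_ndvd_j) Gj_eq0 mul0r.
Qed.

Section QuarticSum.
Variables (lam : F) (t : nat).
Hypotheses (lam4 : lam ^+ 4 = 1) (n_eq : #|F|.-1 = (4 * t)%N).
Local Notation q := #|F|.
Local Notation J a b := (jacobi T a%N b%N).

Let n_eq2 : n = (2 * t * 2)%N. Proof. by rewrite n_eq; lia. Qed.
Let two_neq0 : 2%:R != 0 :> F. Proof. by apply: finField_two_neq0; rewrite n_eq oddM. Qed.
Let double_shift j : (2 * (2 * t + j) = 2 * j + n)%N. Proof. by rewrite n_eq; lia. Qed.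

Let quarter_gt0 : (0 < t)%N.
Proof. by have := card_finField_pred_gt0 F; rewrite n_eq muln_gt0. Qed.

Lemma quad_N1 : c (2 * t) (-1) = 1.
Proof.
rewrite /mchar_pow oppr_eq0 oner_eq0 exprM -(mcharX T_mchar).
by rewrite sqrrN expr1n (mchar1 T_mchar) expr1n.
Qed.

Lemma gauss_quad_sqr : G (2 * t) ^+ 2 = q%:R.
Proof.
rewrite expr2 gaussM_conj // ?quad_N1 ?mul1r //; first by rewrite addnn -mul2n mulnA n_eq.
by apply/negbT/gtnNdvd; rewrite ?n_eq; have := quarter_gt0; lia.
Qed.

Lemma jacobi_quad0 : J (2 * t) 0 = -1.
Proof.
have quad_sum0 : \sum_x c (2 * t) x = 0.
  by apply: (sum_mchar_pow T_gen); apply/negbT/gtnNdvd; rewrite ?n_eq; have := quarter_gt0; lia.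
have /eqP := quad_sum0; rewrite (bigD1 1) //= (mchar_pow1 T_mchar) addrC addr_eq0 => /eqP <-.
rewrite /jacobi (bigD1 1) //= subrr mchar_pow0 mulr0 add0r.
apply: eq_bigr => x x_neq1.
by rewrite (mchar_pow_dvd T_mchar (dvdn0 _)) ?mulr1 // subr_eq0 eq_sym.
Qed.

Lemma jacobi_quad_quad : J (2 * t) (2 * t) = -1.
Proof.
have := gaussM (2 * t) (2 * t).
have -> : (2 * t + 2 * t = n)%N by rewrite n_eq; lia.
rewrite -expr2 gauss_quad_sqr gauss_dvd // quad_N1 mul1r sum_mchar_pow_dvd //.
rewrite natr_card_pred => e.
apply: oppr_inj; rewrite opprK -mulrN1.
by apply: (addIr (q%:R - 1)); rewrite -e; ring.
Qed.

Lemma gauss_quarter_conj : G t * G (2 * t + t) = c t (-1) * q%:R.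
Proof.
rewrite gaussM_conj //; first by rewrite (_ : t + _ = n)%N // n_eq; lia.
by apply/negbT/gtnNdvd; rewrite ?n_eq; have := quarter_gt0; lia.
Qed.

Lemma quartic_twist j : c (4 * j) (4%:R * lam) = c j 4%:R ^+ 4.
Proof. by rewrite (mchar_pow_mull T_mchar) // exprMn lam4 mulr1 (mchar_powX T_mchar). Qed.

Definition quartic_term j :=
  G j ^+ 2 * G (2 * t + j) ^+ 2 / G (4 * j) * c (4 * j) (4%:R * lam).

Lemma quartic_term_dvd j : (n %| 4 * j)%N -> quartic_term j = - (G j * G (2 * t + j)) ^+ 2.
Proof.
move=> n_dvd; have four_lam_neq0 : 4%:R * lam != 0.
  rewrite mulf_neq0 // ?(natrM F 2 2) ?mulf_neq0 //.
  by apply/eqP => lam_eq0; move: lam4; rewrite lam_eq0 expr0n => /eqP; rewrite eq_sym oner_eq0.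
rewrite /quartic_term (gauss_dvd n_dvd) (mchar_pow_dvd T_mchar n_dvd four_lam_neq0).
by rewrite invrN1 mulrN1 mulr1 exprMn.
Qed.

Lemma quartic_term0 : quartic_term 0 = - q%:R.
Proof.
rewrite quartic_term_dvd ?muln0 ?dvdn0 // addn0.
by rewrite gauss_pow0 mulN1r sqrrN gauss_quad_sqr.
Qed.

Lemma quartic_term_half : quartic_term (2 * t) = - q%:R.
Proof.
rewrite quartic_term_dvd; last by rewrite n_eq mulnCA dvdn_mull.
have -> : (2 * t + 2 * t = n)%N by rewrite n_eq; lia.
by rewrite (gauss_dvd (dvdnn n)) mulrN1 sqrrN gauss_quad_sqr.
Qed.

Lemma quartic_term_quarter : quartic_term t = - (q%:R ^+ 2).
Proof.
rewrite quartic_term_dvd ?n_eq // gauss_quarter_conj.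
by rewrite exprMn (mchar_pow_sqrN1 T_mchar) mul1r.
Qed.

Lemma quartic_term_3quarter : quartic_term (3 * t) = - (q%:R ^+ 2).
Proof.
rewrite quartic_term_dvd; last by rewrite n_eq mulnCA dvdn_mull.
rewrite (_ : 2 * t + 3 * t = t + n)%N ?gauss_addn; last by rewrite n_eq; lia.
rewrite (_ : 3 * t = 2 * t + t)%N; last by lia.
by rewrite mulrC gauss_quarter_conj exprMn (mchar_pow_sqrN1 T_mchar) mul1r.
Qed.

Lemma jacobi_quad_conj j : ~~ (n %| j)%N -> ~~ (n %| 2 * t + j)%N ->
  J (2 * t) j * J (2 * t) (2 * t + j) = q%:R.
Proof.
move=> n_ndvd n_ndvd'.
have G_shift := gaussM_jacobi n_ndvd'.
have G_back : G (2 * t) * G (2 * t + j) = J (2 * t) (2 * t + j) * G j.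
  have shift : (2 * t + (2 * t + j) = j + n)%N by rewrite n_eq; lia.
  by rewrite gaussM_jacobi ?shift ?gauss_addn ?(dvdn_addl _ (dvdnn _)).
have G_neq0 : G j * G (2 * t + j) != 0 by rewrite mulf_neq0 ?gauss_neq0.
apply: (mulIf G_neq0); rewrite -gauss_quad_sqr.
transitivity ((J (2 * t) j * G (2 * t + j)) * (J (2 * t) (2 * t + j) * G j)); first ring.
by rewrite -G_shift -G_back; ring.
Qed.

(* Write each squared Gauss sum as a Jacobi sum times G (2 j), then use the duplication formula three times. *)
Lemma quartic_term_ndvd j : ~~ (n %| 4 * j)%N -> quartic_term j = q%:R * J (2 * t) (2 * j).
Proof.
move=> n_ndvd4.
have n_ndvd2 : ~~ (n %| 2 * j)%N by apply: contra n_ndvd4 => /(dvdn_mull 2); rewrite mulnA.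
have n_ndvd1 : ~~ (n %| j)%N by apply: contra n_ndvd2; apply: dvdn_mull.
have n_ndvd' : ~~ (n %| 2 * t + j)%N.
  by apply: contra n_ndvd2 => /(dvdn_mull 2); rewrite double_shift (dvdn_addl _ (dvdnn _)).
have sqr_j := gauss_sqr n_ndvd2.
have sqr_j' : G (2 * t + j) ^+ 2 = J (2 * t + j) (2 * t + j) * G (2 * j).
  by rewrite gauss_sqr double_shift ?gauss_addn ?(dvdn_addl _ (dvdnn _)).
have sqr_2j : G (2 * j) ^+ 2 = J (2 * j) (2 * j) * G (4 * j).
  by rewrite gauss_sqr mulnA.
have twist_2j : c (2 * j) 4%:R = c j 4%:R ^+ 2.
  by rewrite (mchar_pow_mull T_mchar) // (mchar_powX T_mchar).
have twist_j' : c (2 * t + j) 4%:R = c j 4%:R.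
  by rewrite mchar_powD (natrX F 2 2) (quad_sqr T_gen n_eq2) ?mul1r.
rewrite /quartic_term sqr_j sqr_j' quartic_twist.
rewrite (_ : _ * _ / _ = J j j * J (2 * t + j) (2 * t + j) * (G (2 * j) ^+ 2 / G (4 * j))); last by ring.
rewrite sqr_2j mulfK ?gauss_neq0 // -(jacobi_quad_conj n_ndvd1 n_ndvd').
rewrite -(jacobi_duplication T_gen n_eq2 n_ndvd1) -(jacobi_duplication T_gen n_eq2 n_ndvd').
rewrite -(jacobi_duplication T_gen n_eq2 n_ndvd2) twist_j' twist_2j; ring.
Qed.

Lemma quad_char_two : c (2 * t) 2%:R = c t (-1).
Proof.
have [w [w_prim _]] := mchar_generator_prim_root T_gen.
have w2t : w ^+ (2 * t) = -1.
  have /eqP := prim_expr_order w_prim; rewrite n_eq2 exprM sqrf_eq1 => /orP[w2t_eq1|/eqP //].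
  have : (n %| 2 * t)%N = false by apply: gtnNdvd; rewrite ?n_eq; have := quarter_gt0; lia.
  by rewrite (prim_order_dvd w_prim) w2t_eq1.
pose i := w ^+ t; have i2 : i ^+ 2 = -1 by rewrite -exprM mulnC.
have i_neq0 : i != 0 by apply: contra_eq_neq i2 => ->; rewrite expr0n eq_sym oppr_eq0 oner_eq0.
have sqr_one_add_i : (1 + i) ^+ 2 = 2%:R * i.
  have -> : (1 + i) ^+ 2 = 2%:R * i + (i ^+ 2 + 1) by ring.
  by rewrite i2 addNr addr0.
have one_add_i_neq0 : 1 + i != 0.
  by apply: contra_eq_neq sqr_one_add_i => ->; rewrite expr0n eq_sym mulf_neq0.
have quad_i : c (2 * t) i = c t (-1) by rewrite (mchar_pow_mull T_mchar) // i2.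
have := quad_sqr T_gen n_eq2 one_add_i_neq0.
rewrite sqr_one_add_i (mchar_powM T_mchar) quad_i => quad_prod.
by rewrite -[LHS]mulr1 -(mchar_pow_sqrN1 T_mchar t) expr2 mulrA quad_prod mul1r.
Qed.

Lemma sum_jacobi_quad : \sum_(0 <= j < n) J (2 * t) (2 * j) = n%:R * c (2 * t) 2%:R.
Proof.
rewrite big_mkord /jacobi exchange_big /=.
under eq_bigr do rewrite -mulr_sumr (sum_mchar_pow_double T_gen) sqr_one_sub_eq1.
rewrite (bigD1 0) //= (bigD1 2%:R) /=; last by rewrite two_neq0.
rewrite mchar_pow0 mul0r add0r eqxx orbT mul1r big1 ?addr0 1?mulrC //.
by move=> x /andP[/negbTE-> /negbTE->]; rewrite mul0r mulr0.
Qed.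

Lemma quartic_termE j : (j < n)%N ->
  quartic_term j = q%:R * J (2 * t) (2 * j)
    + (if j == t then q%:R - q%:R ^+ 2 else 0)
    + (if j == (3 * t)%N then q%:R - q%:R ^+ 2 else 0).
Proof.
move=> j_lt; have t_gt0 := quarter_gt0.
have [n_dvd|n_ndvd] := boolP (n %| 4 * j)%N; last first.
  rewrite quartic_term_ndvd // !ifF ?addr0 //; apply: contraNF n_ndvd => /eqP->.
    by rewrite n_eq mulnCA dvdn_mull.
  by rewrite n_eq.
have [k j_def] : exists k, j = (k * t)%N.
  by move: n_dvd; rewrite n_eq dvdn_pmul2l // => /dvdnP.
subst j; have k_lt4 : (k < 4)%N by move: j_lt; rewrite n_eq ltn_pmul2r.
case: k j_lt n_dvd k_lt4 => [|[|[|[|//]]]] _ _ _; rewrite ?mul0n ?mul1n.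
- rewrite quartic_term0 muln0 jacobi_quad0 !ifF ?addr0 ?mulrN1 //; apply/negbTE/eqP; lia.
- rewrite quartic_term_quarter jacobi_quad_quad eqxx ifF; first by ring.
  by apply/negbTE/eqP; lia.
- rewrite quartic_term_half (_ : 2 * (2 * t) = 0 + n)%N ?(jacobi_addn T_mchar) ?jacobi_quad0; last by lia.
  by rewrite !ifF ?addr0 ?mulrN1 //; apply/negbTE/eqP; lia.
- rewrite quartic_term_3quarter (_ : 2 * (3 * t) = 2 * t + n)%N ?(jacobi_addn T_mchar); last by lia.
  by rewrite jacobi_quad_quad eqxx ifF; [ring | apply/negbTE/eqP; lia].
Qed.

Lemma quartic_sum :
  3 / n%:R * \sum_(0 <= j < n) quartic_term j = - (6 * q%:R) + 3 * q%:R * c t (-1).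
Proof.
have t_gt0 := quarter_gt0.
have sum_at i : (i < n)%N ->
    \sum_(0 <= j < n) (if j == i then q%:R - q%:R ^+ 2 else 0) = q%:R - q%:R ^+ 2 :> algC.
  by move=> i_lt; rewrite -big_mkcond big_nat1_eq /= i_lt.
rewrite (eq_big_nat _ _ (fun j j_lt => quartic_termE (andP j_lt).2)) !big_split /=.
have t_lt : (t < n)%N by rewrite n_eq; lia.
have t3_lt : (3 * t < n)%N by rewrite n_eq; lia.
rewrite -mulr_sumr sum_jacobi_quad quad_char_two !sum_at //.
have q1_neq0 : q%:R - 1 != 0 :> algC.
  by rewrite -natr_card_pred pnatr_eq0 -lt0n card_finField_pred_gt0.
by rewrite natr_card_pred; field.
Qed.

End QuarticSum.

End GaussSums.

Theorem corollary4p7 (F : finFieldType) (p : nat) (zeta : algC) (T : F -> algC)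
    (lam : F)
    (hp : prime p) (hpodd : odd p) (hchar : p \in [pchar F])
    (hq : (#|F| %% 4 = 1)%N)
    (hzeta : p.-primitive_root zeta)
    (hT : mchar_generator T)
    (hlam : lam ^+ 4 = 1) :
  let q := #|F| in
  let t := ((q - 1) %/ 4)%N in
  3 / (q.-1)%:R *
    \sum_(0 <= j < q.-1)
      (gauss p zeta (mchar_pow T j) ^+ 2 * gauss p zeta (mchar_pow T (2 * t + j)) ^+ 2
         / gauss p zeta (mchar_pow T (4 * j)) * mchar_pow T (4 * j) (4%:R * lam))
  = - (6 * q%:R) + 3 * q%:R * mchar_pow T t (-1).
Proof.
move=> q t.
have n_eq : #|F|.-1 = (4 * t)%N.
  have four_dvd : (4 %| #|F| - 1)%N by rewrite -eqn_mod_dvd ?hq // ltnW ?finNzRing_gt1.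
  by rewrite /t /q -subn1 mulnC divnK.
exact: (quartic_sum hchar hzeta hT hlam n_eq).
Qed.
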